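(* (i) If $(b_0,\dots,b_{m+1})\in X_m(\mathbb C)$ (indices of $b$ taken modulo $m+2$), then $T_i(k):=P_i(b_{\frac{k-i}{2}},\dots,b_{\frac{k+i-2}{2}})$ defines a solution of the $T$-system of level $m$, and for generic $(b_j)$ this solution is nonvanishing. (ii) Every nonvanishing solution of the $T$-system of level $m$ is of this form for a unique $(b_0,\dots,b_{m+1})\in X_m(\mathbb C)$.
   Context: Let $m\ge1$, $J=\begin{pmatrix} i&0\\1&i\end{pmatrix}$, $B(b)=\begin{pmatrix}1&b\\0&-1\end{pmatrix}$. $X_m\subset\mathbb A^{m+2}$ (coordinates $b_0,\dots,b_{m+1}$) is cut out by $B(b_0)JB(b_1)J\cdots B(b_{m+1})J=-1$. The polynomials $P_r$ are defined by $P_0=1$, $P_1(b_1)=b_1$, $P_r(b_1,\dots,b_r)=P_{r-1}(b_1,\dots,b_{r-1})b_r-P_{r-2}(b_1,\dots,b_{r-2})$; $P_i(a_1,\dots,a_i)$ denotes $P_i$ evaluated at the listed $i$ arguments. A solution of the $T$-system of level $m$ is a collection of complex numbers $T_i(k)$, $0\le i\le m$, $k\in\mathbb Z$, $i+k$ even, with $T_0(k)=T_m(k)=1$ for all $k$ and $T_i(k-1)T_i(k+1)=T_{i-1}(k)T_{i+1}(k)+1$ for $1\le i\le m-1$; it is nonvanishing if all $T_i(k)\neq0$. *)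

From HB Require Import structures.
From mathcomp Require Import all_boot all_order all_algebra.
From mathcomp Require Import complex.

From mathcomp Require Import mpoly.
From mathcomp Require Import reals.
Set Implicit Arguments. Unset Strict Implicit. Unset Printing Implicit Defensive.
Import Order.TTheory GRing.Theory Num.Theory.
Local Open Scope ring_scope.

Section Defs.
Variable R : realType.
Local Notation C := (R[i]).

Definition Jmat : 'M[C]_2 :=
  \matrix_(r < 2, c < 2)
    (if (r == 0 :> nat) && (c == 0 :> nat) then 'i%C
     else if (r == 1 :> nat) && (c == 0 :> nat) then 1
     else if (r == 1 :> nat) && (c == 1 :> nat) then 'i%C else 0).

Definition Bmat (b : C) : 'M[C]_2 :=
  \matrix_(r < 2, c < 2)
    (if (r == 0 :> nat) && (c == 0 :> nat) then 1
     else if (r == 0 :> nat) && (c == 1 :> nat) then b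
     else if (r == 1 :> nat) && (c == 1 :> nat) then -1 else 0).

Definition inX (m : nat) (b : 'I_m.+2 -> C) : Prop :=
  \prod_(j < m.+2) (Bmat (b j) * Jmat) = - 1.

(* P_r(a_1,...,a_r), with the arguments given as a function a : nat -> C
   (only a 1, ..., a r are used). *)
Fixpoint Pc (a : nat -> C) (r : nat) : C :=
  match r with
  | 0 => 1
  | r1.+1 => match r1 with
             | 0 => a 1%N
             | r2.+1 => Pc a r1 * a r - Pc a r2
             end
  end.

Definition bmod (m : nat) (b : 'I_m.+2 -> C) (n : int) : C :=
  b (inord `|(n %% (m.+2)%:Z)%Z|%N).

Definition Tof (m : nat) (b : 'I_m.+2 -> C) (i : nat) (k : int) : C :=
  Pc (fun j : nat => bmod b (((k - i%:Z) %/ 2)%Z + j%:Z - 1)) i.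

Definition evenik (i : nat) (k : int) : bool := (2 %| (i%:Z + k))%Z.

(* T : nat -> int -> C is a solution of the T-system of level m
   (values outside 0 <= i <= m, i+k even, are irrelevant). *)
Definition Tsystem (m : nat) (T : nat -> int -> C) : Prop :=
  (forall k : int, evenik 0 k -> T 0%N k = 1) /\
  (forall k : int, evenik m k -> T m k = 1) /\
  (forall (i : nat) (k : int), (1 <= i)%N -> (i <= m - 1)%N -> evenik i.+1 k ->
     T i (k - 1) * T i (k + 1) = T i.-1 k * T i.+1 k + 1).

Definition nonvanishing (m : nat) (T : nat -> int -> C) : Prop :=
  forall (i : nat) (k : int), (i <= m)%N -> evenik i k -> T i k != 0.

Definition Tagree (m : nat) (T T' : nat -> int -> C) : Prop :=
  forall (i : nat) (k : int), (i <= m)%N -> evenik i k -> T i k = T' i k.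

(* "for generic b in X_m": there is a dense (Zariski) open subset of X_m,
   given as the principal open {f <> 0} of X_m which is Zariski-dense in X_m
   (every polynomial vanishing on it vanishes on all of X_m), on which P holds. *)
Definition generic_on_X (m : nat) (P : ('I_m.+2 -> C) -> Prop) : Prop :=
  exists f : {mpoly C[m.+2]},
    (forall g : {mpoly C[m.+2]},
        (forall b, inX b -> f.@[b] != 0 -> g.@[b] = 0) ->
        forall b, inX b -> g.@[b] = 0) /\
    (forall b, inX b -> f.@[b] != 0 -> P b).

End Defs.

(* B(x)J is conjugate to the continuant matrix [[x,1],[-1,0]], so a point of
   X_m is an (m+2)-periodic sequence b whose products of m+2 consecutive
   continuant matrices equal -1; equivalently, all continuants P_m of b equal
   1 and all P_(m+1) vanish (a frieze).  Part (i) is then the Desnanot-Jacobi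
   identity for continuants, and part (ii) holds because the recursion
   expresses every T_i as a continuant of the row T_1, which is b.
   For genericity, X_m is covered by charts, in each of which it is an open
   subset of an affine space, plus a degenerate locus that deforms into a
   chart; the constant point b_j = z + 1/z, for z a primitive 2(m+2)-th root
   of unity (e.g. b_j = 2 cos(pi/(m+2))), lies in every chart and has all
   T_i(k) nonzero, so the product of the T_i(k) is nonzero on a dense open
   subset of X_m. *)

From mathcomp Require Import all_boot all_order all_algebra.
From mathcomp Require Import complex mpoly reals.
From mathcomp Require Import ring zify.
From mathcomp Require Import cyclic separable cyclotomic.
Set Implicit Arguments. Unset Strict Implicit. Unset Printing Implicit Defensive.
Import Order.TTheory GRing.Theory Num.Theory.
Local Open Scope ring_scope.

Lemma nat_ind2 (P : nat -> Prop) :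
  P 0%N -> P 1%N -> (forall k, P k -> P k.+1 -> P k.+2) -> forall k, P k.
Proof.
move=> P0 P1 PSS k; suff: P k /\ P k.+1 by case.
by elim: k => [|k [Pk Pk1]]; split=> //; apply: PSS.
Qed.

Section Continuants.
Variable R : comNzRingType.
Implicit Types (a : int -> R) (s : int).

(* [cont a s k.+1] is the continuant P_k(a_s, ..., a_(s+k-1)), so that the
   T-system value T_i corresponds to [cont _ _ i.+1]; [cont a s 0 = 0] is the
   convenient value P_(-1). *)
Fixpoint cont a s k : R :=
  match k with
  | 0 => 0
  | 1 => 1
  | (k'.+1 as k1).+1 => cont a s k1 * a (s + k'%:Z) - cont a s k'
  end.

#[global] Arguments cont : simpl never.

Lemma cont0 a s : cont a s 0 = 0. Proof. by []. Qed.
Lemma cont1 a s : cont a s 1 = 1. Proof. by []. Qed.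

Lemma contSS a s k : cont a s k.+2 = cont a s k.+1 * a (s + k%:Z) - cont a s k.
Proof. by []. Qed.

Lemma eq_cont_in a a' s k :
  (forall t : nat, (t.+1 < k)%N -> a (s + t%:Z) = a' (s + t%:Z)) ->
  cont a s k = cont a' s k.
Proof.
elim/nat_ind2: k => [//|//|k IHk IHk1] eq_a.
rewrite !contSS eq_a // IHk ?IHk1 // => t ht; apply: eq_a; lia.
Qed.

Lemma eq_cont a a' s k : a =1 a' -> cont a s k = cont a' s k.
Proof. by move=> eq_a; apply: eq_cont_in => t _. Qed.

Lemma cont_shift a j s k : cont (fun p => a (p + j)) s k = cont a (s + j) k.
Proof.
elim/nat_ind2: k => [//|//|k IHk IHk1].
by rewrite !contSS IHk IHk1 addrAC.
Qed.

Lemma contSS_left a s k :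
  cont a s k.+2 = a s * cont a (s + 1) k.+1 - cont a (s + 2) k.
Proof.
elim/nat_ind2: k => [||k IHk IHk1]; try by rewrite !contSS ?cont1 ?cont0 !addr0; ring.
rewrite contSS IHk IHk1 [cont a (s + 1) k.+3]contSS [cont a (s + 2) k.+2]contSS.
have -> : s + 1 + k.+1%:Z = s + k.+2%:Z by lia.
have -> : s + 2 + k%:Z = s + k.+2%:Z by lia.
ring.
Qed.

Lemma cont_desnanot a s k :
  cont a s k.+1 * cont a (s + 1) k.+1 = cont a s k.+2 * cont a (s + 1) k + 1.
Proof.
elim: k => [|k IHk]; first by rewrite contSS !cont1 !cont0 mulr0 add0r mulr1.
rewrite [cont a (s + 1) k.+2]contSS [cont a s k.+3]contSS.
have -> : s + 1 + k%:Z = s + k.+1%:Z by lia.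
by ring: IHk.
Qed.

Definition mx2 (x y z w : R) : 'M[R]_2 :=
  \matrix_(i < 2, j < 2) if i == ord0 then (if j == ord0 then x else y)
                         else (if j == ord0 then z else w).

Lemma mx2_ext (A : 'M[R]_2) x y z w :
  A ord0 ord0 = x -> A ord0 ord_max = y -> A ord_max ord0 = z ->
  A ord_max ord_max = w -> A = mx2 x y z w.
Proof.
move=> <- <- <- <-; apply/matrixP => i j; rewrite !mxE.
by case: i => [[|[|//]] ?]; case: j => [[|[|//]] ?]; congr (A _ _); apply: val_inj.
Qed.

Lemma mulmx2 x y z w x' y' z' w' :
  mx2 x y z w * mx2 x' y' z' w' =
  mx2 (x * x' + y * z') (x * y' + y * w') (z * x' + w * z') (z * y' + w * w').
Proof. by apply: mx2_ext; rewrite !mxE !big_ord_recr big_ord0 /= !mxE add0r. Qed.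

Lemma mx2_1 : 1 = mx2 1 0 0 1.
Proof. by apply: mx2_ext; rewrite !mxE. Qed.

Lemma mx2_N1 : -1 = mx2 (-1) 0 0 (-1).
Proof. by apply: mx2_ext; rewrite !mxE ?oppr0. Qed.

Lemma mx2_inj x y z w x' y' z' w' : mx2 x y z w = mx2 x' y' z' w' ->
  [/\ x = x', y = y', z = z' & w = w'].
Proof.
move=> /matrixP eq_mx.
by have := eq_mx ord0 ord0; have := eq_mx ord0 ord_max;
   have := eq_mx ord_max ord0; have := eq_mx ord_max ord_max; rewrite !mxE.
Qed.

Definition contmx (x : R) : 'M[R]_2 := mx2 x 1 (-1) 0.

Lemma prod_contmx a s k : \prod_(t < k.+1) contmx (a (s + t%:Z)) =
  mx2 (cont a s k.+2) (cont a s k.+1) (- cont a (s + 1) k.+1) (- cont a (s + 1) k).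
Proof.
elim: k => [|k IHk]; first by rewrite big_ord1 contSS !cont1 !cont0 addr0 mul1r subr0 oppr0.
rewrite big_ord_recr /= IHk /contmx mulmx2 [cont a s k.+3]contSS.
rewrite [cont a (s + 1) k.+2]contSS (_ : s + 1 + k%:Z = s + k.+1%:Z); last by lia.
congr mx2; ring.
Qed.

End Continuants.

Lemma rmorph_cont (R S : comNzRingType) (f : {rmorphism R -> S}) (a : int -> R) s k :
  f (cont a s k) = cont (f \o a) s k.
Proof.
elim/nat_ind2: k => [||k IHk IHk1]; rewrite ?cont0 ?cont1 ?rmorph0 ?rmorph1 //.
by rewrite !contSS rmorphB rmorphM IHk IHk1.
Qed.

Lemma periodicZ (T : Type) (a : int -> T) (p : int) :
  (forall x, a (x + p) = a x) -> forall x (q : int), a (x + q * p) = a x.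
Proof.
move=> a_per.
have a_perN (k : nat) x : a (x + k%:Z * p) = a x.
  elim: k x => [|k IHk] x; first by rewrite mul0r addr0.
  by rewrite -(IHk x) -(a_per (x + k%:Z * p)) intS; congr a; ring.
move=> x [] k; first exact: a_perN.
by rewrite -(a_perN k.+1 (x + _)); congr a; rewrite NegzE intS; ring.
Qed.

Lemma periodic_mod (T : Type) (a : int -> T) (p : int) :
  (forall x, a (x + p) = a x) -> forall x, a (x %% p)%Z = a x.
Proof.
by move=> a_per x; rewrite [in RHS](divz_eq x p) addrC periodicZ.
Qed.

Section Monodromy.
Variables (R : comNzRingType) (m : nat).
Implicit Types (a : int -> R) (j s : int).
Local Notation N := m.+2.

Definition monodromy a j : 'M[R]_2 := \prod_(t < N) contmx (a (j + t%:Z)).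

Lemma monodromyE a j : monodromy a j =
  mx2 (cont a j m.+3) (cont a j m.+2) (- cont a (j + 1) m.+2) (- cont a (j + 1) m.+1).
Proof. exact: prod_contmx. Qed.

Definition frieze a := forall s, cont a s m.+1 = 1 /\ cont a s m.+2 = 0.

Lemma frieze_chart a : frieze a ->
  forall j, a (j + m.+1%:Z) = cont a (j + 1) m /\ a j = cont a (j + 2) m.
Proof.
move=> fr j; have [cont1_j1 cont0_j1] := fr (j + 1); have [_ cont0_j] := fr j.
split; apply/eqP; rewrite -subr_eq0; apply/eqP.
  by rewrite -cont0_j1 contSS cont1_j1 mul1r; congr (a _ - _); lia.
by rewrite -cont0_j contSS_left cont1_j1 mulr1.
Qed.

Lemma frieze_periodic a : frieze a -> forall x, a (x + N%:Z) = a x.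
Proof.
move=> fr x; have [chart_x1 _] := frieze_chart fr (x + 1).
have [_ chart_x] := frieze_chart fr x.
rewrite (_ : x + N%:Z = x + 1 + m.+1%:Z) ?chart_x1 ?chart_x; last by lia.
by congr cont; lia.
Qed.

Lemma monodromy_eqN1 a j : cont a (j + 1) m.+1 = 1 ->
  a (j + m.+1%:Z) = cont a (j + 1) m -> a j = cont a (j + 2) m ->
  monodromy a j = -1.
Proof.
move=> cont1_j1 chart_r chart_l.
have cont0_j1 : cont a (j + 1) m.+2 = 0.
  by rewrite contSS cont1_j1 mul1r -addrA -chart_r subrr.
have cont1_j2 : cont a (j + 2) m.+1 = 1.
  have := cont_desnanot a (j + 1) m.
  by rewrite cont1_j1 cont0_j1 mul0r add0r mul1r -addrA.
rewrite monodromyE mx2_N1 contSS_left [cont a j m.+2]contSS_left cont0_j1.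
by rewrite cont1_j1 cont1_j2 -chart_l mulr0 mulr1 subrr sub0r oppr0.
Qed.

Lemma frieze_monodromy a : frieze a -> forall j, monodromy a j = -1.
Proof.
move=> fr j; have [chart_r chart_l] := frieze_chart fr j.
by apply: monodromy_eqN1 => //; case: (fr (j + 1)).
Qed.

Lemma monodromy_frieze a : (forall j, monodromy a j = -1) -> frieze a.
Proof.
move=> mon s; have := mon s; have := mon (s - 1).
rewrite !monodromyE mx2_N1 subrK => /mx2_inj[_ _ _ /eqP] + /mx2_inj[_ -> _ _].
by rewrite eqr_opp => /eqP.
Qed.

Definition contmx_inv (x : R) : 'M[R]_2 := mx2 0 (-1) 1 x.

Lemma contmxK x : contmx_inv x * contmx x = 1.
Proof. by rewrite /contmx_inv /contmx mulmx2 mx2_1; congr mx2; ring. Qed.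

Lemma monodromy_rot a j : a (j + N%:Z) = a j ->
  monodromy a j = -1 -> monodromy a (j + 1) = -1.
Proof.
move=> a_per mon_j.
have mon_shift : contmx (a j) * monodromy a (j + 1) = monodromy a j * contmx (a j).
  transitivity (\prod_(t < N.+1) contmx (a (j + t%:Z))).
    rewrite big_ord_recl /= addr0; congr (_ * _); apply: eq_bigr => t _.
    by congr (contmx (a _)); rewrite /bump /=; lia.
  by rewrite big_ord_recr /= a_per.
have := congr1 (fun M => contmx_inv (a j) * M) mon_shift.
by rewrite /= mon_j mulrA contmxK mul1r mulN1r mulrN contmxK.
Qed.

Lemma monodromy_periodic a : (forall x, a (x + N%:Z) = a x) ->
  forall j j', monodromy a j = -1 -> monodromy a j' = -1.
Proof.
move=> a_per j j' mon_j.
have mon_jd (d : nat) : monodromy a (j + d%:Z) = -1.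
  elim: d => [|d IHd]; first by rewrite addr0.
  by rewrite intS addrCA addrC; apply: monodromy_rot.
have mon_per : forall x, monodromy a (x + N%:Z) = monodromy a x.
  by move=> x; apply: eq_bigr => t _; rewrite addrAC a_per.
have -> : j' = j + ((j' - j) %% N%:Z)%Z + ((j' - j) %/ N%:Z)%Z * N%:Z.
  by rewrite -addrA [_ + (_ * _)%R]addrC -divz_eq addrC subrK.
rewrite (periodicZ mon_per).
by case: ((j' - j) %% N%:Z)%Z (modz_ge0 (j' - j) (isT : N%:Z != 0)).
Qed.

End Monodromy.

Lemma prod_conj (R : pzRingType) (U V : R) k (F : 'I_k -> R) :
  U * V = 1 -> V * U = 1 ->
  \prod_(j < k) (U * F j * V) = U * (\prod_(j < k) F j) * V.
Proof.
move=> UV VU; elim: k F => [|k IHk] F; first by rewrite !big_ord0 mulr1.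
by rewrite !big_ord_recr /= IHk !mulrA -(mulrA _ V U) VU mulr1.
Qed.

Section OverC.
Variables (R : realType) (m : nat).
Local Notation C := R[i].
Local Notation N := m.+2.
Implicit Types (b : 'I_N -> C) (a : int -> C).

Lemma Bmat_mx2 (x : C) : Bmat x = mx2 1 x 0 (-1).
Proof. by apply: mx2_ext; rewrite !mxE. Qed.

Lemma Jmat_mx2 : Jmat R = mx2 'i 0 1 'i.
Proof. by apply: mx2_ext; rewrite !mxE. Qed.

Lemma BJ_contmx (x : C) :
  Bmat x * Jmat R = mx2 1 (- 'i) 0 1 * contmx x * mx2 1 'i 0 1.
Proof.
have i2 : 'i * 'i = -1 :> C by rewrite -expr2 sqr_i.
by rewrite Bmat_mx2 Jmat_mx2 /contmx !mulmx2; congr mx2; ring: i2.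
Qed.

Lemma inX_prod_contmx b : inX b <-> \prod_(j < N) contmx (b j) = -1.
Proof.
have UV : mx2 1 (- 'i) 0 1 * mx2 1 'i 0 1 = 1 :> 'M[C]_2.
  by rewrite mulmx2 mx2_1; congr mx2; ring.
have VU : mx2 1 'i 0 1 * mx2 1 (- 'i) 0 1 = 1 :> 'M[C]_2.
  by rewrite mulmx2 mx2_1; congr mx2; ring.
rewrite /inX (eq_bigr _ (fun j _ => BJ_contmx (b j))) prod_conj //.
split=> [prod_N1 | ->]; last by rewrite mulrN1 mulNr UV.
have := congr1 (fun M => mx2 1 'i 0 1 * M * mx2 1 (- 'i) 0 1) prod_N1.
by rewrite /= !mulrA VU mul1r -mulrA VU mulr1 mulrN1 mulNr VU.
Qed.

Lemma bmodE b (r : 'I_N) : bmod b r%:Z = b r.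
Proof.
rewrite /bmod modz_nat /= modn_small //.
by congr b; apply: val_inj; rewrite /= inordK.
Qed.

Lemma bmod_periodic b x : bmod b (x + N%:Z) = bmod b x.
Proof. by rewrite /bmod modzDr. Qed.

Lemma inX_monodromy b j : inX b <-> monodromy m (bmod b) j = -1.
Proof.
have -> : inX b <-> monodromy m (bmod b) 0 = -1.
  rewrite inX_prod_contmx /monodromy.
  by under [X in X = _ <-> _]eq_bigr => t _ do rewrite -bmodE -[t%:Z]add0r.
have mon_per := monodromy_periodic (bmod_periodic b).
by split; apply: mon_per.
Qed.

Lemma inX_frieze b : inX b <-> frieze m (bmod b).
Proof.
have mon_per := monodromy_periodic (bmod_periodic b).
split=> [/(inX_monodromy _ 0) mon0 | /frieze_monodromy mon]; last exact/(inX_monodromy _ 0).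
by apply: monodromy_frieze => j; apply: mon_per mon0.
Qed.

Lemma bmod_periodicK a : (forall x, a (x + N%:Z) = a x) ->
  bmod (fun r : 'I_N => a r%:Z) =1 a.
Proof.
move=> a_per x; rewrite /bmod -(periodic_mod a_per x) inordK.
  by rewrite gez0_abs // modz_ge0.
have := ltz_pmod x (isT : 0 < N%:Z); have := modz_ge0 x (isT : N%:Z != 0); lia.
Qed.

Lemma Pc_cont a s r : Pc (fun j : nat => a (s + j%:Z - 1)) r = cont a s r.+1.
Proof.
elim/nat_ind2: r => [//| |r IHr IHr1].
  by rewrite contSS cont1 cont0 /= addrK addr0 mul1r subr0.
rewrite -[LHS]/(Pc _ r.+1 * a (s + r.+2%:Z - 1) - Pc _ r) IHr IHr1 contSS.
by congr (_ * a _ - _); lia.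
Qed.

Lemma Tof_cont b i s : Tof b i (i%:Z + 2 * s) = cont (bmod b) s i.+1.
Proof.
by rewrite /Tof -Pc_cont (_ : ((i%:Z + 2 * s - i%:Z) %/ 2)%Z = s) // addrC addKr mulKz.
Qed.

Lemma evenikP i k : reflect (exists s, k = i%:Z + 2 * s) (evenik i k).
Proof.
apply: (iffP dvdzP) => [[q kq] | [s ->]]; first by exists (q - i%:Z); lia.
by exists (i%:Z + s); lia.
Qed.

Lemma Tsystem_Tof b : inX b -> Tsystem m (Tof b).
Proof.
move=> /inX_frieze fr; split=> //; split=> [k /evenikP[s ->] | ].
  by rewrite Tof_cont; case: (fr s).
move=> [//|i] k _ _ /evenikP[s ->].
rewrite (_ : i.+2%:Z + 2 * s - 1 = i.+1%:Z + 2 * s); last by lia.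
rewrite (_ : i.+2%:Z + 2 * s + 1 = i.+1%:Z + 2 * (s + 1)); last by lia.
rewrite [X in Tof b i.+1.-1 X](_ : _ = i%:Z + 2 * (s + 1)); last by lia.
by rewrite !Tof_cont cont_desnanot mulrC.
Qed.

Section NonvanishingTsystem.
Variable T : nat -> int -> C.
Hypotheses (T_sys : Tsystem m T) (T_nv : nonvanishing m T).
Let a x := T 1%N (1 + 2 * x).

Lemma Tsystem_cont i : (i <= m)%N -> forall s, T i (i%:Z + 2 * s) = cont a s i.+1.
Proof.
have [T0 [_ Trel]] := T_sys.
elim/nat_ind2: i => [_ s | _ s | i IHi IHi1 i_le s].
- by rewrite cont1 T0 //; apply/evenikP; exists s.
- by rewrite contSS cont1 cont0 mul1r subr0 addr0.
have := Trel i.+1 (i.+2%:Z + 2 * s) isT (ltac:(lia)) (ltac:(by apply/evenikP; exists s)).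
rewrite (_ : i.+2%:Z + 2 * s - 1 = i.+1%:Z + 2 * s); last by lia.
rewrite (_ : i.+2%:Z + 2 * s + 1 = i.+1%:Z + 2 * (s + 1)); last by lia.
rewrite [X in T i.+1.-1 X](_ : _ = i%:Z + 2 * (s + 1)); last by lia.
have T_i_neq0 : T i (i%:Z + 2 * (s + 1)) != 0.
  by apply: T_nv; [lia | apply/evenikP; exists (s + 1)].
rewrite !IHi1 ?IHi; try lia; rewrite IHi in T_i_neq0; last by lia.
move=> rel; apply: (mulfI T_i_neq0); apply: (addIr 1).
by rewrite -rel cont_desnanot mulrC.
Qed.

Lemma Tsystem_frieze : (0 < m)%N -> frieze m a.
Proof.
case: m T_sys T_nv Tsystem_cont => [//|m'] [_ [Tm _]] nv T_cont _ s.
have cont_m s' : cont a s' m'.+2 = 1.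
  by rewrite -T_cont // Tm //; apply/evenikP; exists s'.
split=> //.
have := cont_desnanot a s m'.+1; rewrite !cont_m mul1r -[X in X = _]add0r => /addIr.
have cont_m1 : cont a (s + 1) m'.+1 != 0.
  by rewrite -T_cont // nv //; apply/evenikP; exists (s + 1).
by move/esym/eqP; rewrite mulf_eq0 (negbTE cont_m1) orbF => /eqP.
Qed.

End NonvanishingTsystem.

Lemma nonvanishing_Tsystem_Tof T : (0 < m)%N -> Tsystem m T -> nonvanishing m T ->
  exists b, [/\ inX b, Tagree m T (Tof b) &
    forall b', inX b' -> Tagree m T (Tof b') -> forall j, b' j = b j].
Proof.
move=> m_gt0 T_sys T_nv; have fr := Tsystem_frieze T_sys T_nv m_gt0.
set a := fun x => T 1%N (1 + 2 * x) in fr.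
have bmod_a := bmod_periodicK (frieze_periodic fr).
exists (fun r => a r%:Z); split.
- by apply/inX_frieze => s; rewrite !(eq_cont _ _ bmod_a).
- move=> i k i_le /evenikP[s ->].
  by rewrite Tof_cont (eq_cont _ _ bmod_a) Tsystem_cont.
move=> b' _ T_b' j.
have := T_b' 1%N (1 + 2 * j%:Z) m_gt0 (ltac:(by apply/evenikP; exists j%:Z)).
by rewrite Tof_cont contSS cont1 cont0 mul1r subr0 addr0 bmodE.
Qed.

End OverC.

Lemma closed_prim_root (F : closedFieldType) k :
  (0 < k)%N -> k%:R != 0 :> F -> exists z : F, k.-primitive_root z.
Proof.
move=> k_gt0 k_neq0.
have [rs] := closed_field_poly_normal ('X^k - 1 : {poly F}).
rewrite (monicP (monicXnsubC 1 k_gt0)) scale1r => Ers.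
have rs_unity : all k.-unity_root rs.
  by apply/allP => x; rewrite -root_prod_XsubC -Ers.
have rs_uniq : uniq rs by rewrite -separable_prod_XsubC -Ers separable_Xn_sub_1.
have rs_size : (k < (size rs).+1)%N.
  by rewrite -(size_prod_XsubC rs id) -Ers size_XnsubC.
by have [z _ z_prim] := hasP (has_prim_root k_gt0 rs_unity rs_uniq rs_size); exists z.
Qed.

Section ChebyshevPoint.
Variables (F : fieldType) (m : nat) (z : F).
Hypothesis z_prim : (2 * m.+2).-primitive_root z.
Let beta := z + z^-1.

Let z_neq0 : z != 0.
Proof. by rewrite (prim_root_eq0 z_prim) muln_eq0. Qed.

(* For z = exp(i pi / (m+2)), beta = 2 cos(pi / (m+2)) and this is the
   Chebyshev formula cont = sin(k pi / (m+2)) / sin(pi / (m+2)). *)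
Lemma cont_cheb s k :
  z ^+ k * (z ^+ 2 - 1) * cont (fun _ => beta) s k = z * (z ^+ (2 * k) - 1).
Proof.
have z_beta : z * beta = z ^+ 2 + 1 by rewrite mulrDr mulfV // expr2.
elim/nat_ind2: k => [||k IHk IHk1]; first by rewrite cont0 mulr0 muln0 expr0 subrr mulr0.
  by rewrite cont1 mulr1 muln1 expr1.
rewrite contSS; set c := cont (fun _ => beta) s in IHk IHk1 *.
have -> : z ^+ k.+2 * (z ^+ 2 - 1) * (c k.+1 * beta - c k) =
    z * beta * (z ^+ k.+1 * (z ^+ 2 - 1) * c k.+1) - z ^+ 2 * (z ^+ k * (z ^+ 2 - 1) * c k).
  by rewrite !exprS; ring.
rewrite IHk IHk1 z_beta !mulnS !exprD; ring.
Qed.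

Lemma cont_cheb_neq0 s k : (0 < k < m.+2)%N -> cont (fun _ => beta) s k != 0.
Proof.
move=> /andP[k_gt0 k_lt]; apply/eqP => cont_eq0; have := cont_cheb s k.
rewrite cont_eq0 mulr0 => /esym/eqP; rewrite mulf_eq0 (negbTE z_neq0) /=.
rewrite subr_eq0 -(prim_order_dvd z_prim) dvdn_pmul2l // => /(dvdn_leq k_gt0).
by rewrite leqNgt k_lt.
Qed.

Lemma frieze_cheb : frieze m (fun _ => beta).
Proof.
have z2_neq1 : z ^+ 2 - 1 != 0.
  rewrite subr_eq0 -(prim_order_dvd z_prim).
  by apply/negP => /(dvdn_leq (isT : (0 < 2)%N)); lia.
have z2N : z ^+ (2 * m.+2) = 1 := prim_expr_order z_prim.
have zN : z ^+ m.+2 = -1.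
  have : (z ^+ m.+2) ^+ 2 == 1 by rewrite -exprM mulnC z2N.
  rewrite sqrf_eq1 => /orP[|/eqP //].
  rewrite -(prim_order_dvd z_prim) => /(dvdn_leq (isT : (0 < m.+2)%N)); lia.
move=> s; split.
  set c := cont _ s m.+1; have := cont_cheb s m.+1; rewrite -/c.
  have lhs : z * (z ^+ m.+1 * (z ^+ 2 - 1) * c) = - ((z ^+ 2 - 1) * c).
    transitivity (z ^+ m.+2 * ((z ^+ 2 - 1) * c)); last by rewrite zN mulN1r.
    by rewrite (exprS z m.+1); ring.
  have rhs : z * (z * (z ^+ (2 * m.+1) - 1)) = - ((z ^+ 2 - 1) * 1).
    transitivity (z ^+ (2 * m.+2) - z ^+ 2); last by rewrite z2N; ring.
    by rewrite (mulnS 2 m.+1) exprD; ring.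
  by move=> /(congr1 (fun x => z * x)); rewrite /= lhs rhs => /oppr_inj /(mulfI z2_neq1).
have := cont_cheb s m.+2; rewrite z2N subrr mulr0 zN => /eqP.
by rewrite !mulf_eq0 oppr_eq0 oner_eq0 (negbTE z2_neq1) /= => /eqP.
Qed.

End ChebyshevPoint.

Section ProdT.
Variables (R : realType) (m : nat).
Local Notation C := R[i].
Local Notation N := m.+2.
Implicit Types (b : 'I_N -> C).

Definition Xmod (p : int) : {mpoly C[N]} := 'X_(inord `|(p %% N%:Z)%Z|%N).

Definition prodT : {mpoly C[N]} :=
  \prod_(1 <= i < m) \prod_(s < N) cont Xmod s%:Z i.+1.

Lemma meval_prodT b :
  prodT.@[b] = \prod_(1 <= i < m) \prod_(s < N) cont (bmod b) s%:Z i.+1.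
Proof.
rewrite rmorph_prod; apply: eq_bigr => i _; rewrite rmorph_prod.
by apply: eq_bigr => s _; rewrite rmorph_cont; apply: eq_cont => p /=; rewrite mevalXU.
Qed.

Lemma cont_bmod_mod b s k : cont (bmod b) (s %% N%:Z)%Z k = cont (bmod b) s k.
Proof.
transitivity (cont (bmod b) ((s %% N%:Z)%Z + (s %/ N%:Z)%Z * N%:Z) k).
  rewrite -[RHS]cont_shift; apply: eq_cont => p.
  by rewrite periodicZ // => x; apply: bmod_periodic.
by rewrite addrC -divz_eq.
Qed.

Lemma prodT_neq0 b : prodT.@[b] != 0 ->
  forall i s, (i < m)%N -> cont (bmod b) s i.+1 != 0.
Proof.
rewrite meval_prodT prodf_seq_neq0 => /allP prod_neq0 [s _|i s i_lt].
  by rewrite cont1 oner_eq0.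
have := prod_neq0 i.+1; rewrite mem_index_iota i_lt => /(_ isT).
have s_lt : (`|(s %% N%:Z)%Z|%N < N)%N.
  by have := ltz_pmod s (isT : 0 < N%:Z); have := modz_ge0 s (isT : N%:Z != 0); lia.
move=> /prodf_neq0 /(_ (Ordinal s_lt) isT).
by rewrite /= gez0_abs ?modz_ge0 // cont_bmod_mod.
Qed.

Lemma Tof_nonvanishing b : inX b -> prodT.@[b] != 0 -> nonvanishing m (Tof b).
Proof.
move=> /inX_frieze fr /prodT_neq0 cont_neq0 i k i_le /evenikP[s ->].
rewrite Tof_cont; case: (ltnP i m) => [i_lt | i_ge]; first exact: cont_neq0.
by rewrite (_ : i = m); [case: (fr s) => -> _; rewrite oner_eq0 | lia].
Qed.

Lemma exists_inX_prodT_neq0 : exists bstar : 'I_N -> C, inX bstar /\ prodT.@[bstar] != 0.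
Proof.
have [z z_prim] : exists z : C, (2 * N).-primitive_root z.
  by apply: closed_prim_root; rewrite ?muln_gt0 // pnatr_eq0 muln_eq0.
exists (fun _ => z + z^-1); split; first exact/inX_frieze/frieze_cheb.
rewrite meval_prodT prodf_seq_neq0; apply/allP => i; rewrite mem_index_iota => i_range.
apply/prodf_neq0 => s _.
by apply: (cont_cheb_neq0 z_prim); lia.
Qed.

End ProdT.

Lemma poly_eq0_pointwise (F : numDomainType) (p : {poly F}) :
  (forall x, p.[x] = 0) -> p = 0.
Proof.
move=> p0; apply: (@roots_geq_poly_eq0 _ _ [seq i%:R | i <- iota 0 (size p)]).
- by apply/allP => _ /mapP[i _ ->]; apply/eqP/p0.
- by rewrite map_inj_uniq ?iota_uniq // => i j /eqP; rewrite eqr_nat => /eqP.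
- by rewrite size_map size_iota.
Qed.

Section QFrac.
Variables (F : numFieldType) (q : {poly F}).
Implicit Types (f g : F -> F).

Definition qfrac f := exists (p : {poly F}) (k : nat),
  forall t, q.[t] != 0 -> f t = p.[t] / q.[t] ^+ k.

Lemma eq_qfrac f g : qfrac f -> (forall t, q.[t] != 0 -> f t = g t) -> qfrac g.
Proof. by move=> [p [k fE]] fg; exists p, k => t qt; rewrite -fg // fE. Qed.

Lemma qfrac_poly p : qfrac (fun t => p.[t]).
Proof. by exists p, 0%N => t _; rewrite expr0 divr1. Qed.

Lemma qfrac_cst c : qfrac (fun _ => c).
Proof. by apply: eq_qfrac (qfrac_poly c%:P) _ => t _; rewrite hornerC. Qed.

Lemma qfracD f g : qfrac f -> qfrac g -> qfrac (fun t => f t + g t).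
Proof.
move=> [p1 [k1 fE]] [p2 [k2 gE]].
exists (p1 * q ^+ k2 + p2 * q ^+ k1), (k1 + k2)%N => t qt.
have qk1 : q.[t] ^+ k1 != 0 by rewrite expf_neq0.
have qk2 : q.[t] ^+ k2 != 0 by rewrite expf_neq0.
by rewrite fE // gE // hornerD !hornerM !horner_exp exprD; field; rewrite qk1 qk2.
Qed.

Lemma qfracN f : qfrac f -> qfrac (fun t => - f t).
Proof. by move=> [p [k fE]]; exists (- p), k => t qt; rewrite fE // hornerN mulNr. Qed.

Lemma qfracM f g : qfrac f -> qfrac g -> qfrac (fun t => f t * g t).
Proof.
move=> [p1 [k1 fE]] [p2 [k2 gE]]; exists (p1 * p2), (k1 + k2)%N => t qt.
have qk1 : q.[t] ^+ k1 != 0 by rewrite expf_neq0.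
have qk2 : q.[t] ^+ k2 != 0 by rewrite expf_neq0.
by rewrite fE // gE // hornerM exprD; field; rewrite qk1 qk2.
Qed.

Lemma qfrac_divq f : qfrac f -> qfrac (fun t => f t / q.[t]).
Proof.
move=> [p [k fE]]; exists p, k.+1 => t qt.
have qk : q.[t] ^+ k != 0 by rewrite expf_neq0.
by rewrite fE // exprS; field; rewrite qk qt.
Qed.

Lemma qfrac_sum (I : Type) (r : seq I) (fs : I -> F -> F) :
  (forall i, qfrac (fs i)) -> qfrac (fun t => \sum_(i <- r) fs i t).
Proof.
move=> fs_q; elim: r => [|i r IHr].
  by apply: eq_qfrac (qfrac_cst 0) _ => t _; rewrite big_nil.
by apply: eq_qfrac (qfracD (fs_q i) IHr) _ => t _; rewrite big_cons.
Qed.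

Lemma qfrac_prod (I : Type) (r : seq I) (fs : I -> F -> F) :
  (forall i, qfrac (fs i)) -> qfrac (fun t => \prod_(i <- r) fs i t).
Proof.
move=> fs_q; elim: r => [|i r IHr].
  by apply: eq_qfrac (qfrac_cst 1) _ => t _; rewrite big_nil.
by apply: eq_qfrac (qfracM (fs_q i) IHr) _ => t _; rewrite big_cons.
Qed.

Lemma qfrac_cont (a : F -> int -> F) s k :
  (forall p, qfrac (fun t => a t p)) -> qfrac (fun t => cont (a t) s k).
Proof.
move=> a_q; elim/nat_ind2: k => [||k IHk IHk1]; try exact: qfrac_cst.
by apply: eq_qfrac (qfracD (qfracM IHk1 (a_q _)) (qfracN IHk)) _ => t _; rewrite contSS.
Qed.

Lemma qfrac_meval n (v : F -> 'I_n -> F) (g : {mpoly F[n]}) :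
  (forall i, qfrac (fun t => v t i)) -> qfrac (fun t => g.@[v t]).
Proof.
move=> v_q.
apply: (@eq_qfrac (fun t => \sum_(mon <- msupp g) g@_mon * \prod_i v t i ^+ mon i));
  last by move=> t _; rewrite mevalE.
apply: qfrac_sum => mon.
apply: qfracM; first exact: qfrac_cst.
apply: qfrac_prod => i; elim: (mon i) => [|k IHk]; first exact: qfrac_cst.
by apply: eq_qfrac (qfracM (v_q i) IHk) _ => t _; rewrite exprS.
Qed.

(* Rational functions form an integral domain. *)
Lemma qfrac_mul_eq0 f g t0 t1 : qfrac f -> qfrac g ->
  (forall t, q.[t] != 0 -> f t * g t = 0) -> q.[t1] != 0 -> g t1 != 0 ->
  q.[t0] != 0 -> f t0 = 0.
Proof.
move=> [pf [kf fE]] [pg [kg gE]] fg0 qt1 gt1 qt0.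
have pfgq : pf * pg * q = 0.
  apply: poly_eq0_pointwise => t; rewrite !hornerM.
  have [-> | qt] := eqVneq q.[t] 0; first by rewrite mulr0.
  have qkf : q.[t] ^+ kf != 0 by rewrite expf_neq0.
  have qkg : q.[t] ^+ kg != 0 by rewrite expf_neq0.
  have -> : pf.[t] * pg.[t] = f t * g t * (q.[t] ^+ kf * q.[t] ^+ kg).
    by rewrite fE // gE //; field; rewrite qkf qkg.
  by rewrite fg0 // !mul0r.
have pg_neq0 : pg != 0 by apply: contra_neq gt1 => pg0; rewrite gE // pg0 horner0 mul0r.
have q_neq0 : q != 0 by apply: contra_neq qt0 => ->; rewrite horner0.
move/eqP: pfgq; rewrite !mulf_eq0 (negbTE pg_neq0) (negbTE q_neq0) !orbF => /eqP pf0.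
by rewrite fE // pf0 horner0 mul0r.
Qed.

End QFrac.

Section Window.
Variables (R : realType) (m : nat).
Local Notation C := R[i].
Local Notation N := m.+2.
Implicit Types (b : 'I_N -> C) (d : int -> C).

Definition window j d : 'I_N -> C := fun r => d (j + ((r%:Z - j) %% N%:Z)%Z).

Lemma bmod_window j d u : 0 <= u < N%:Z -> bmod (window j d) (j + u) = d (j + u).
Proof.
move=> /andP[u_ge0 u_lt]; rewrite /bmod /window inordK; last first.
  have := ltz_pmod (j + u) (isT : 0 < N%:Z).
  by have := modz_ge0 (j + u) (isT : N%:Z != 0); lia.
by rewrite gez0_abs ?modz_ge0 // modzDml addrAC subrr add0r modz_small ?u_ge0.
Qed.

Lemma window_bmod j b : window j (bmod b) =1 b.
Proof.
move=> r; rewrite /window -(periodic_mod (bmod_periodic b)) modzDmr.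
by rewrite addrC subrK (periodic_mod (bmod_periodic b)) bmodE.
Qed.

Lemma inX_window j d : monodromy m d j = -1 -> inX (window j d).
Proof.
move=> mon_d; apply/(inX_monodromy _ j); rewrite -mon_d.
by apply: eq_bigr => t _; rewrite bmod_window //; have := ltn_ord t; lia.
Qed.

End Window.

Section Chart.
Variables (R : realType) (m' : nat).
Local Notation C := R[i].
Local Notation m := m'.+1.
Local Notation N := m.+2.
Implicit Types (b : 'I_N -> C) (x : int -> C).

(* In the chart at j, the entries x_(j+1), ..., x_(j+m-1) are free; the entry
   at j+m is then solved from T_m = 1, and those at j and j+m+1 from the
   relations of frieze_chart. *)
Definition chart_mid j x p : C :=
  if p == j + m%:Z then (1 + cont x (j + 1) m') / cont x (j + 1) m else x p.

Definition chart_seq j x p : C :=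
  if p == j then cont (chart_mid j x) (j + 2) m
  else if p == j + m.+1%:Z then cont x (j + 1) m else chart_mid j x p.

Definition chart j x : 'I_N -> C := window j (chart_seq j x).

Lemma chart_inX j x : cont x (j + 1) m != 0 -> inX (chart j x).
Proof.
move=> cont_neq0; apply: inX_window.
have seq_mid (k : nat) : (k < m)%N ->
    chart_seq j x (j + 1 + k%:Z) = chart_mid j x (j + 1 + k%:Z).
  by move=> k_lt; rewrite /chart_seq; do 2 (case: eqP => [?|_]; first lia).
have mid_x (k : nat) : (k < m')%N -> chart_mid j x (j + 1 + k%:Z) = x (j + 1 + k%:Z).
  by move=> k_lt; rewrite /chart_mid; case: eqP => [?|_] //; lia.
apply: monodromy_eqN1.
- rewrite (@eq_cont_in _ _ (chart_mid j x)); last by move=> k k_lt; apply: seq_mid; lia.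
  rewrite contSS (@eq_cont_in _ (chart_mid j x) x); last by move=> k k_lt; apply: mid_x; lia.
  rewrite (@eq_cont_in _ (chart_mid j x) x _ m'); last by move=> k k_lt; apply: mid_x; lia.
  rewrite /chart_mid (_ : j + 1 + m'%:Z = j + m%:Z) ?eqxx; last by lia.
  by rewrite mulrC divfK // addrK.
- rewrite {1}/chart_seq (_ : j + m.+1%:Z == j = false); last by apply/eqP; lia.
  rewrite eqxx; apply: eq_cont_in => k k_lt.
  by rewrite seq_mid ?mid_x //; lia.
- rewrite {1}/chart_seq eqxx; apply: eq_cont_in => k k_lt; rewrite /chart_seq.
  by do 2 (case: eqP => [?|_]; first lia).
Qed.

Lemma eq_chart j x x' : x =1 x' -> chart j x =1 chart j x'.
Proof.
move=> eq_x; have eq_mid : chart_mid j x =1 chart_mid j x'.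
  by move=> p; rewrite /chart_mid !(eq_cont _ _ eq_x) eq_x.
by move=> r; rewrite /chart /window /chart_seq (eq_cont _ _ eq_mid) (eq_cont _ _ eq_x) eq_mid.
Qed.

Lemma chart_bmod j b : inX b -> cont (bmod b) (j + 1) m != 0 -> chart j (bmod b) =1 b.
Proof.
move=> /inX_frieze fr cont_neq0.
have mid_b : chart_mid j (bmod b) =1 bmod b.
  move=> p; rewrite /chart_mid; case: eqP => [->|//].
  have [+ _] := fr (j + 1); rewrite contSS (_ : j + 1 + m'%:Z = j + m%:Z); last by lia.
  by move=> cont1; apply: (mulfI cont_neq0); rewrite mulrC divfK // -cont1; ring.
move=> r; rewrite /chart -[RHS](window_bmod j b); rewrite /window /chart_seq.
have [chart_r chart_l] := frieze_chart fr j.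
rewrite (eq_cont _ _ mid_b) mid_b.
by case: eqP => [->|_]; [rewrite chart_l | case: eqP => [->|_] //; rewrite chart_r].
Qed.

Lemma qfrac_chart (q : {poly C}) (x : C -> int -> C) j r :
  (forall p, qfrac q (fun t => x t p)) -> (forall t, q.[t] = cont (x t) (j + 1) m) ->
  qfrac q (fun t => chart j (x t) r).
Proof.
move=> x_q qE; rewrite /chart /window /chart_seq; move: (j + _) => p.
have mid_q p' : qfrac q (fun t => chart_mid j (x t) p').
  rewrite /chart_mid; case: eqP => _; last exact: x_q.
  apply: eq_qfrac (qfrac_divq (qfracD (qfrac_cst _ 1) (qfrac_cont _ _ x_q))) _.
  by move=> t _; rewrite qE.
by case: eqP => _; [apply: qfrac_cont | case: eqP => _; [apply: qfrac_cont|]].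
Qed.

End Chart.

Section Density.
Variables (R : realType) (m' : nat).
Local Notation C := R[i].
Local Notation m := m'.+1.
Local Notation N := m.+2.
Implicit Types (b : 'I_N -> C).
Variable g : {mpoly C[N]}.
Hypothesis g_eq0 : forall b, inX b -> (prodT R m).@[b] != 0 -> g.@[b] = 0.

(* Join b by a line, in the chart at j, to a point of X where prodT does not
   vanish; along the line g * prodT is a rational function vanishing
   identically, while prodT is not identically 0. *)
Lemma chart_eq0 j b : inX b -> cont (bmod b) (j + 1) m != 0 -> g.@[b] = 0.
Proof.
move=> b_X b_chart.
have [bs [bs_X bs_prodT]] := exists_inX_prodT_neq0 R m.
have bs_chart := prodT_neq0 bs_prodT (j + 1) (ltnSn m').
pose line p : {poly C} := (bmod b p)%:P + (bmod bs p - bmod b p)%:P * 'X.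
pose x t p := (line p).[t].
have x0 : x 0 =1 bmod b by move=> p; rewrite /x /line !hornerE; ring.
have x1 : x 1 =1 bmod bs.
  by move=> p; rewrite /x /line hornerD hornerM !hornerC hornerX mulr1 addrC subrK.
pose q := cont line (j + 1) m.
have qE t : q.[t] = cont (x t) (j + 1) m.
  by rewrite -horner_evalE rmorph_cont.
have q0 : q.[0] != 0 by rewrite qE (eq_cont _ _ x0).
have q1 : q.[1] != 0 by rewrite qE (eq_cont _ _ x1).
pose v t : 'I_N -> C := chart j (x t).
have v_q r : qfrac q (fun t => v t r) by apply: qfrac_chart => // p; apply: qfrac_poly.
have v0 : v 0 =1 b by move=> r; rewrite /v (eq_chart j x0) chart_bmod.
have v1 : v 1 =1 bs by move=> r; rewrite /v (eq_chart j x1) chart_bmod.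
rewrite -(meval_eq _ v0).
apply: (qfrac_mul_eq0 (qfrac_meval g v_q) (qfrac_meval (prodT R m) v_q) _ q1) => //.
  move=> t qt; have [->|prodT_neq0] := eqVneq (prodT R m).@[v t] 0; first by rewrite mulr0.
  by rewrite g_eq0 ?mul0r //; apply: chart_inX; rewrite -qE.
by rewrite (meval_eq _ v1).
Qed.

End Density.

Section Degenerate.
Variables (R : realType) (m'' : nat).
Local Notation C := R[i].
Local Notation m := m''.+2.
Local Notation N := m.+2.
Variable b : 'I_N -> C.
Hypotheses (b_X : inX b) (b_deg : forall s, cont (bmod b) s m = 0).

(* Moving the entries at 0 and m of the window [0, N) in opposite directions
   keeps b in X and, for u != 0, puts it in the chart at 1. *)
Definition deform (u : C) (p : int) : C :=
  bmod b p + u * ((p == m%:Z)%:R - (p == 0)%:R).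

Lemma deform_mid u (p : int) : 0 < p < m%:Z -> deform u p = bmod b p.
Proof.
move=> /andP[p_gt0 p_lt]; rewrite /deform.
by do 2 (case: eqP => [?|_]; first lia); rewrite subrr mulr0 addr0.
Qed.

Lemma cont_deform u s k : 0 < s -> s + k%:Z <= m.+1%:Z ->
  cont (deform u) s k = cont (bmod b) s k.
Proof. by move=> s_gt0 sk_le; apply: eq_cont_in => t t_lt; apply: deform_mid; lia. Qed.

Lemma cont_degenerate_pred s : cont (bmod b) s m''.+1 = -1.
Proof.
have [cont1 _] := (inX_frieze b).1 b_X (s - 1).
have := cont_desnanot (bmod b) (s - 1) m''.+1.
by rewrite subrK cont1 !b_deg mul1r mul0r => /esym/eqP; rewrite addr_eq0 => /eqP.
Qed.

Lemma cont_deform_chart u : cont (deform u) 2 m = - u.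
Proof.
rewrite contSS !cont_deform //; try lia.
rewrite (_ : 2 + m''%:Z = m%:Z); last by lia.
rewrite /deform eqxx (_ : m%:Z == 0 = false) ?subr0 ?mulr1 ?cont_degenerate_pred; last first.
  by apply/eqP; lia.
have := b_deg 2; rewrite contSS (_ : 2 + m''%:Z = m%:Z); last by lia.
by rewrite cont_degenerate_pred => /eqP; rewrite subr_eq0 => /eqP <-; ring.
Qed.

Lemma inX_deform u : inX (window 0 (deform u) : 'I_N -> C).
Proof.
have [chart_r chart_l] := frieze_chart ((inX_frieze b).1 b_X) 0.
rewrite !add0r in chart_r chart_l.
apply: inX_window; apply: monodromy_eqN1; rewrite add0r.
- rewrite contSS !cont_deform //; try lia.
  by rewrite b_deg cont_degenerate_pred mul0r sub0r opprK.
- rewrite cont_deform // /deform; try lia.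
  by do 2 (case: eqP => [?|_]; first lia); rewrite subrr mulr0 addr0.
- rewrite ?add0r cont_deform_chart /deform (_ : 0 == m%:Z = false) ?eqxx.
    by rewrite chart_l b_deg sub0r add0r mulrN1.
  by apply/eqP; lia.
Qed.

Lemma cont_window_deform u :
  cont (bmod (window 0 (deform u) : 'I_N -> C)) 2 m = - u.
Proof.
rewrite -(cont_deform_chart u); apply: eq_cont_in => k k_lt.
by rewrite -[2 + _]add0r bmod_window //; apply/andP; split; lia.
Qed.

Lemma window_deform0 : window 0 (deform 0) =1 b.
Proof. by move=> r; rewrite -[RHS](window_bmod 0 b) /window /deform mul0r addr0. Qed.

Lemma qfrac_deform p : qfrac 1 (fun u => deform u p).
Proof.
apply: eq_qfrac (qfrac_poly 1 ((bmod b p)%:P + 'X * ((p == m%:Z)%:R - (p == 0)%:R)%:P)) _.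
by move=> u _; rewrite hornerD hornerM !hornerC hornerX.
Qed.

End Degenerate.

Lemma charts_cover_eq0 (R : realType) (m' : nat) (g : {mpoly R[i][m'.+3]}) :
  (forall j (b : 'I_m'.+3 -> R[i]), inX b -> cont (bmod b) (j + 1) m'.+1 != 0 ->
     g.@[b] = 0) ->
  forall b, inX b -> g.@[b] = 0.
Proof.
move=> g_chart b b_X.
have chart_or_deg : (exists s, cont (bmod b) s m'.+1 != 0) \/
                    (forall s, cont (bmod b) s m'.+1 = 0).
  case: (boolP [exists s : 'I_m'.+3, cont (bmod b) s%:Z m'.+1 != 0]).
    by move=> /existsP[s s_chart]; left; exists s%:Z.
  move=> /existsPn no_chart; right => s; rewrite -cont_bmod_mod.
  have := ltz_pmod s (isT : 0 < m'.+3%:Z).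
  case: (s %% _)%Z (modz_ge0 s (isT : m'.+3%:Z != 0)) => // k _ k_lt.
  by have := no_chart (Ordinal (k_lt : (k < m'.+3)%N)); rewrite negbK => /eqP.
case: chart_or_deg => [[s s_chart] | b_deg].
  by apply: (g_chart (s - 1) _ b_X); rewrite subrK.
case: m' g g_chart b b_X b_deg => [|m''] g g_chart b b_X b_deg.
  by have := b_deg 0; rewrite cont1 => /eqP; rewrite oner_eq0.
pose v u : 'I_m''.+4 -> R[i] := window 0 (deform b u).
have v_eq0 u : u != 0 -> g.@[v u] = 0.
  move=> u_neq0; apply: (g_chart 1); first exact: (inX_deform b_X b_deg).
  by rewrite (cont_window_deform b_X b_deg) oppr_eq0.
have v_q r : qfrac 1 (fun u => v u r) by apply: qfrac_deform.
rewrite -(meval_eq _ (window_deform0 b)) -/(v 0).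
apply: (qfrac_mul_eq0 (qfrac_meval g v_q) (qfrac_poly _ 'X) _ (t1 := 1));
  rewrite ?hornerC ?hornerX ?oner_eq0 //.
move=> u _; have [->|u_neq0] := eqVneq u 0; first by rewrite hornerX mulr0.
by rewrite v_eq0 ?mul0r.
Qed.

Lemma prodT_dense (R : realType) (m : nat) (g : {mpoly R[i][m.+2]}) :
  (forall b, inX b -> (prodT R m).@[b] != 0 -> g.@[b] = 0) ->
  forall b, inX b -> g.@[b] = 0.
Proof.
case: m g => [|m'] g g_eq0; last exact: charts_cover_eq0 (chart_eq0 g_eq0).
by move=> b b_X; apply: g_eq0; rewrite // /prodT big_geq // rmorph1 oner_eq0.
Qed.

Theorem proposition4p32 (R : realType) (m : nat) (hm : (1 <= m)%N) :
  (* (i) *)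
  (forall b : 'I_m.+2 -> R[i], inX b -> Tsystem m (Tof b)) /\
  generic_on_X (fun b : 'I_m.+2 -> R[i] => nonvanishing m (Tof b)) /\
  (* (ii) *)
  (forall T : nat -> int -> R[i], Tsystem m T -> nonvanishing m T ->
     exists b : 'I_m.+2 -> R[i],
       [/\ inX b, Tagree m T (Tof b) &
           forall b' : 'I_m.+2 -> R[i], inX b' -> Tagree m T (Tof b') ->
             forall j, b' j = b j]).
Proof.
split; first exact: Tsystem_Tof.
split; last by move=> T; apply: nonvanishing_Tsystem_Tof.
exists (prodT R m); split; first exact: prodT_dense.
exact: Tof_nonvanishing.
Qed.
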